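(* Fix $d\in\mathbf{N}$. The following statement (C1) is equivalent to statement (C2), and statement (C1') is equivalent to statement (C2'). (C1) For every $N\in\mathbf{N}$: if there exist an orthonormal basis $v_1,\dots,v_{d+1}$ of $\mathbf{R}^{d+1}$ and $x_1,\dots,x_N\in\mathbf{S}^d$ such that $\mu=\frac1N\sum_{i=1}^N\delta_{x_i}$ and $x_i\in\{v_j,-v_j\}$ whenever $i\equiv j \pmod{d+1}$, then $\mu$ maximizes $E_1$ over $\mathcal{P}_N^{=}(\mathbf{S}^d)$. (C2) For every $\alpha>1$ and every $N\in\mathbf{N}$: $\mu$ maximizes $E_\alpha$ over $\mathcal{P}_N^{=}(\mathbf{S}^d)$ if and only if there exist an orthonormal basis $v_1,\dots,v_{d+1}$ of $\mathbf{R}^{d+1}$ and $x_1,\dots,x_N\in\mathbf{S}^d$ such that $\mu=\frac1N\sum_{i=1}^N\delta_{x_i}$ and $x_i\in\{v_j,-v_j\}$ whenever $i\equiv j \pmod{d+1}$. (C1') If there exists an orthonormal basis $v_1,\dots,v_{d+1}$ of $\mathbf{R}^{d+1}$ such that $\mu=\sum_{i=1}^{d+1}(a_i\delta_{v_i}+b_i\delta_{-v_i})$ with $a_i,b_i\ge0$ and $a_i+b_i=\frac1{d+1}$ for all $i$, then $\mu$ maximizes $E_1$ over $\mathcal{P}_{\mathrm{fin}}(\mathbf{S}^d)$. (C2') For every $\alpha>1$: $\mu$ maximizes $E_\alpha$ over $\mathcal{P}_{\mathrm{fin}}(\mathbf{S}^d)$ if and only if there exists an orthonormal basis $v_1,\dots,v_{d+1}$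 of $\mathbf{R}^{d+1}$ such that $\mu=\sum_{i=1}^{d+1}(a_i\delta_{v_i}+b_i\delta_{-v_i})$ with $a_i,b_i\ge0$ and $a_i+b_i=\frac1{d+1}$ for all $i$.
   Context: $\mathbf{S}^d=\{x\in\mathbf{R}^{d+1}:|x|=1\}$, with geodesic distance $\rho(x,y)=\arccos(x\cdot y)$. Let $\Lambda_0(t)=\frac{2}{\pi}\min\{t,\pi-t\}$ for $t\in[0,\pi]$ and $\Lambda(x,y)=\Lambda_0(\rho(x,y))\in[0,1]$. For $\alpha\in[1,\infty)$ and a finite nonnegative Borel measure $\mu$ on $\mathbf{S}^d$, $E_\alpha(\mu)=\frac12\iint\Lambda(x,y)^\alpha\,d\mu(x)\,d\mu(y)$. $\delta_x$ is the Dirac probability measure at $x$. $\mathcal{P}_N^{=}(\mathbf{S}^d)$ is the set of probability measures $\frac1N\sum_{i=1}^N\delta_{x_i}$ with $x_i\in\mathbf{S}^d$ (not necessarily distinct); $\mathcal{P}_{\mathrm{fin}}(\mathbf{S}^d)$ is the set of Borel probability measures on $\mathbf{S}^d$ with finite support. *)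

From mathcomp Require Import all_boot all_order all_algebra.
From mathcomp Require Import all_classical all_reals all_analysis.
Set Implicit Arguments. Unset Strict Implicit. Unset Printing Implicit Defensive.
Import Order.TTheory GRing.Theory Num.Theory.
Local Open Scope ring_scope.

Section Defs.
Variable R : realType.
Variable d : nat.

Definition vec := 'rV[R]_(d.+1).

Definition dot (x y : vec) : R := \sum_(k < d.+1) x 0 k * y 0 k.

Definition on_sphere (x : vec) : Prop := dot x x = 1.

Definition geod (x y : vec) : R := acos (dot x y).

Definition Lambda0 (t : R) : R := 2 / pi * Num.min t (pi - t).

Definition Lambda (x y : vec) : R := Lambda0 (geod x y).

(* A finitely supported (signed) measure, given as a formal finite
   combination sum_k w_k delta_{p_k} of Dirac masses. *)
Definition fmeas := seq (vec * R).

Definition mass (mu : fmeas) (x : vec) : R := \sum_(p <- mu | p.1 == x) p.2.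

Definition same_measure (mu nu : fmeas) : Prop := forall x, mass mu x = mass nu x.

Definition energy (alpha : R) (mu : fmeas) : R :=
  2^-1 * \sum_(p <- mu) \sum_(q <- mu) p.2 * q.2 * powR (Lambda p.1 q.1) alpha.

Definition in_Pfin (mu : fmeas) : Prop :=
  (forall x, 0 <= mass mu x) /\
  (forall x, mass mu x != 0 -> on_sphere x) /\
  \sum_(p <- mu) p.2 = 1.

Definition empirical (N : nat) (x : 'I_N -> vec) : fmeas :=
  [seq (x i, N%:R^-1) | i <- enum 'I_N].

Definition in_PN (N : nat) (mu : fmeas) : Prop :=
  exists x : 'I_N -> vec, (forall i, on_sphere (x i)) /\ same_measure mu (empirical x).

Definition maximizes (P : fmeas -> Prop) (f : fmeas -> R) (mu : fmeas) : Prop :=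
  P mu /\ forall nu, P nu -> f nu <= f mu.

Definition orthonormal_basis (v : 'I_d.+1 -> vec) : Prop :=
  forall j k, dot (v j) (v k) = (j == k)%:R.

(* index j (0-based) with i == j mod (d+1) *)
Definition modidx (N : nat) (i : 'I_N) : 'I_d.+1 := inord (i %% d.+1).

Definition cross_config (N : nat) (mu : fmeas) : Prop :=
  exists (v : 'I_d.+1 -> vec) (x : 'I_N -> vec),
    orthonormal_basis v /\
    (forall i, on_sphere (x i)) /\
    (forall i, x i = v (modidx i) \/ x i = - v (modidx i)) /\
    same_measure mu (empirical x).

Definition cross_combination (v : 'I_d.+1 -> vec) (a b : 'I_d.+1 -> R) : fmeas :=
  flatten [seq [:: (v i, a i); (- v i, b i)] | i <- enum 'I_d.+1].

Definition cross_fin (mu : fmeas) : Prop :=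
  exists (v : 'I_d.+1 -> vec) (a b : 'I_d.+1 -> R),
    orthonormal_basis v /\
    (forall i, 0 <= a i /\ 0 <= b i /\ a i + b i = (d.+1)%:R^-1) /\
    same_measure mu (cross_combination v a b).

Definition C1 : Prop :=
  forall N : nat, (0 < N)%N -> forall mu : fmeas,
    cross_config N mu -> maximizes (in_PN N) (energy 1) mu.

Definition C2 : Prop :=
  forall alpha : R, 1 < alpha -> forall N : nat, (0 < N)%N -> forall mu : fmeas,
    maximizes (in_PN N) (energy alpha) mu <-> cross_config N mu.

Definition C1' : Prop :=
  forall mu : fmeas, cross_fin mu -> maximizes in_Pfin (energy 1) mu.

Definition C2' : Prop :=
  forall alpha : R, 1 < alpha -> forall mu : fmeas,
    maximizes in_Pfin (energy alpha) mu <-> cross_fin mu.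

End Defs.

From mathcomp Require Import all_boot all_order all_algebra all_fingroup.
From mathcomp Require Import all_classical all_reals all_analysis.
From mathcomp Require Import ring lra zify.
Set Implicit Arguments. Unset Strict Implicit. Unset Printing Implicit Defensive.
Import Order.TTheory GRing.Theory Num.Theory.
Local Open Scope ring_scope.

(* The kernel [Lambda] takes values in [[0, 1]], so for [a >= 1] we have
   [Lambda^a <= Lambda <= Lambda^a + (a - 1)], whence
   [E_a mu <= E_1 mu <= E_a mu + (a - 1) / 2] for every probability measure [mu].
   On a cross configuration [Lambda] only takes the values [0] (same axis) and [1]
   (different axes), so [E_a = E_1] there for every [a > 0]. This yields (C1) from
   (C2) by letting [a] tend to [1], and shows that under (C1) cross configurations
   maximise every [E_a].
   Conversely, if [mu] maximises [E_a] and the cross configuration [nu] maximises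
   [E_1], then [E_1 mu <= E_1 nu = E_a nu <= E_a mu <= E_1 mu]. The equality
   [E_a mu = E_1 mu] forces [Lambda] into [{0, 1}] on the support of [mu]: its points
   are pairwise orthogonal or antipodal, so they lie on the axes of an orthonormal
   basis. Then [E_1 mu = (1 - sum_j w_j^2) / 2], where [w_j] is the mass on the
   [j]-th axis, and [E_1 mu = E_1 nu] forces these masses to be as equal as possible:
   [1 / (d + 1)] each, or in the [N]-point case counts [N / (d + 1)] rounded down or
   up, which after relabelling axes and points is the pattern [i = j mod (d + 1)]. *)

Section Sphere.
Variables (R : realType) (d : nat).
Local Notation vec := (vec R d).
Implicit Types (x y z : vec) (v : 'I_d.+1 -> vec).

Lemma dotC x y : dot x y = dot y x.
Proof. by apply: eq_bigr => k _; rewrite mulrC. Qed.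

Lemma dotNl x y : dot (- x) y = - dot x y.
Proof. by rewrite /dot -sumrN; apply: eq_bigr => k _; rewrite mxE mulNr. Qed.

Lemma dotNr x y : dot x (- y) = - dot x y.
Proof. by rewrite dotC dotNl dotC. Qed.

Lemma dotDl x y z : dot (x + y) z = dot x z + dot y z.
Proof. by rewrite /dot -big_split; apply: eq_bigr => k _; rewrite mxE mulrDl. Qed.

Lemma dotDr x y z : dot z (x + y) = dot z x + dot z y.
Proof. by rewrite dotC dotDl !(dotC z). Qed.

Lemma dotZl (a : R) x y : dot (a *: x) y = a * dot x y.
Proof. by rewrite /dot mulr_sumr; apply: eq_bigr => k _; rewrite mxE mulrA. Qed.

Lemma dotxx_ge0 x : 0 <= dot x x.
Proof. by apply: sumr_ge0 => k _; rewrite -expr2 sqr_ge0. Qed.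

Lemma dotxx_eq0 x : dot x x = 0 -> x = 0.
Proof.
move=> x0; apply/rowP => k; rewrite mxE.
have sq_ge0 (i : 'I_d.+1) : true -> 0 <= x 0 i * x 0 i by rewrite -expr2 sqr_ge0.
by move: (psumr_eq0P sq_ge0 x0 (i:=k) isT) => /eqP; rewrite mulf_eq0 orbb => /eqP.
Qed.

Lemma dotDD x y : dot (x + y) (x + y) = dot x x + 2 * dot x y + dot y y.
Proof. by rewrite !dotDl !dotDr (dotC y x); ring. Qed.

Lemma dotBB x y : dot (x - y) (x - y) = dot x x - 2 * dot x y + dot y y.
Proof. by rewrite dotDD !dotNr dotNl opprK; ring. Qed.

Lemma sphereN x : on_sphere x -> on_sphere (- x).
Proof. by rewrite /on_sphere dotNl dotNr opprK. Qed.

Lemma sphere_dot_le1 x y : on_sphere x -> on_sphere y -> dot x y <= 1.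
Proof. by move=> sx sy; have := dotxx_ge0 (x - y); rewrite dotBB sx sy; lra. Qed.

Lemma sphere_dot_geN1 x y : on_sphere x -> on_sphere y -> -1 <= dot x y.
Proof. by move=> sx sy; have := dotxx_ge0 (x + y); rewrite dotDD sx sy; lra. Qed.

Lemma sphere_dot_eq1 x y : on_sphere x -> on_sphere y -> dot x y = 1 -> x = y.
Proof.
move=> sx sy xy1; apply/eqP; rewrite -subr_eq0; apply/eqP/dotxx_eq0.
by rewrite dotBB sx sy xy1; ring.
Qed.

Lemma sphere_dot_eqN1 x y : on_sphere x -> on_sphere y -> dot x y = -1 -> y = - x.
Proof.
move=> sx sy xyN1; apply/eqP; rewrite -addr_eq0 addrC; apply/eqP/dotxx_eq0.
by rewrite dotDD sx sy xyN1; ring.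
Qed.

Definition on_axis v (j : 'I_d.+1) x := x = v j \/ x = - v j.

Lemma onb_sphere v j : orthonormal_basis v -> on_sphere (v j).
Proof. by move=> onb; rewrite /on_sphere onb eqxx. Qed.

Lemma on_axis_sphere v j x : orthonormal_basis v -> on_axis v j x -> on_sphere x.
Proof. by move=> onb [->|->]; [|apply: sphereN]; apply: onb_sphere. Qed.

Lemma onb_inj v i j : orthonormal_basis v -> (v i == v j) = (i == j).
Proof.
move=> onb; apply/eqP/eqP => [vij|-> //]; apply/eqP.
by have := onb i j; rewrite vij onb eqxx; case: (i == j) => //= /eqP; rewrite oner_eq0.
Qed.

Lemma onb_oppr_neq v i j : orthonormal_basis v -> (- v i == v j) = false.
Proof.
move=> onb; apply/negP => /eqP vij; have := onb i j.
rewrite -vij dotNr onb eqxx; case: (i == j) => /=; lra.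
Qed.

Lemma on_axis_dot v j k x y : orthonormal_basis v ->
  on_axis v j x -> on_axis v k y -> dot x y = (j == k)%:R \/ dot x y = - (j == k)%:R.
Proof. move=> onb [->|->] [->|->]; rewrite ?dotNl ?dotNr ?opprK onb; by [left|right]. Qed.

End Sphere.

Section PowR.
Variable R : realType.
Implicit Types t a : R.

Lemma powR_le_self t a : 0 <= t <= 1 -> 1 <= a -> t `^ a <= t.
Proof.
move=> /andP[t0 t1] a1; have [->|tn0] := eqVneq t 0.
  by rewrite powR0 // gt_eqF // (lt_le_trans _ a1).
by apply: ge1r_powR => //; rewrite t1 andbT lt_neqAle eq_sym tn0.
Qed.

Lemma powR_eq_self t a : 0 <= t <= 1 -> 1 < a -> t `^ a = t -> t = 0 \/ t = 1.
Proof.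
move=> /andP[t0 t1] a1 ta; have [->|tn0] := eqVneq t 0; first by left.
right; have : t * t `^ (a - 1) = t * 1 by rewrite mulr_powRB1 ?mulr1 // (lt_trans _ a1).
move/(mulfI tn0)/eqP; rewrite powR_eq1 => /orP[/eqP //|/orP[|]].
  by rewrite ltNge t0.
by rewrite subr_eq0 => /eqP a_eq1; move: a1; rewrite a_eq1 ltxx.
Qed.

(* From [expR u >= 1 + u] with [u = (a - 1) ln t] and [- t ln t <= 1 - t <= 1]. *)
Lemma subr_powR_le t a : 0 <= t <= 1 -> 1 <= a -> t - t `^ a <= a - 1.
Proof.
move=> /andP[t0 t1] a1; have [->|tn0] := eqVneq t 0.
  by rewrite powR0 ?subrr ?subr_ge0 // gt_eqF // (lt_le_trans _ a1).
have t_gt0 : 0 < t by rewrite lt_neqAle eq_sym tn0.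
have [->|an1] := eqVneq a 1; first by rewrite powRr1 // !subrr.
have a1_gt0 : 0 < a - 1 by rewrite subr_gt0 lt_neqAle eq_sym an1.
rewrite -(mulr_powRB1 t0 (_ : 0 < a)); last by rewrite (lt_trans ltr01) // -subr_gt0.
rewrite /powR (negbTE tn0).
have expR_ge := expR_ge1Dx ((a - 1) * ln t).
have lnN_le : - ln t <= t^-1 - 1.
  rewrite -lnV ?posrE //; have tV_gt0 : 0 < t^-1 by rewrite invr_gt0.
  by have := @le_ln1Dx R (t^-1 - 1); rewrite addrCA subrr addr0; apply; lra.
have tlnt_le : - (t * ln t) <= 1.
  by have := ler_wpM2l t0 lnN_le; rewrite mulrBr mulfV // mulr1 mulrN; lra.
have : t - t * expR ((a - 1) * ln t) <= (a - 1) * - (t * ln t).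
  by have := ler_wpM2l t0 expR_ge; rewrite mulrDr mulr1; nra.
by have := ler_wpM2l (ltW a1_gt0) tlnt_le; rewrite mulr1; lra.
Qed.

End PowR.

Section Lambda.
Variables (R : realType) (d : nat).
Local Notation vec := (vec R d).
Implicit Types (x y : vec) (v : 'I_d.+1 -> vec).

Lemma Lambda0_ge0_le1 (t : R) : 0 <= t <= pi -> 0 <= Lambda0 t <= 1.
Proof.
move=> /andP[t0 tpi]; have pi_gt0 := pi_gt0 R; rewrite /Lambda0.
suff scaled (u : R) : 0 <= u -> u * 2 <= pi -> 0 <= 2 / pi * u <= 1.
  by have [|] := lerP t (pi - t) => ?; apply: scaled; lra.
move=> u0 u2; rewrite mulr_ge0 ?divr_ge0 ?(ltW pi_gt0) //=.
by rewrite mulrAC ler_pdivrMr //; lra.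
Qed.

Lemma Lambda0_eq1 (t : R) : 0 <= t <= pi -> Lambda0 t = 1 -> t = pi / 2.
Proof.
move=> /andP[t0 tpi]; have pi_gt0 := pi_gt0 R; rewrite /Lambda0 => L1.
have pi_neq0 : pi != 0 :> R by rewrite gt_eqF.
have min2 : Num.min t (pi - t) * 2 = pi.
  by rewrite -[RHS]mul1r -{2}L1 mulrAC divfK // mulrC.
by move: min2; have [|] := lerP t (pi - t); lra.
Qed.

Lemma Lambda0_eq0 (t : R) : 0 <= t <= pi -> Lambda0 t = 0 -> t = 0 \/ t = pi.
Proof.
move=> /andP[t0 tpi]; have pi_gt0 := pi_gt0 R; rewrite /Lambda0 => /eqP.
rewrite !mulf_eq0 invr_eq0 pnatr_eq0 (gt_eqF pi_gt0) /= => /eqP.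
by have [|] := lerP t (pi - t); lra.
Qed.

Lemma Lambda_dot0 x y : dot x y = 0 -> Lambda x y = 1.
Proof.
move=> xy0; rewrite /Lambda /geod xy0 acos0 /Lambda0.
have pi_neq0 : pi != 0 :> R by rewrite gt_eqF ?pi_gt0.
have -> : pi - pi / 2 = pi / 2 :> R by lra.
by rewrite minxx mulrA divfK // divff // pnatr_eq0.
Qed.

Lemma Lambda_dot1 x y : dot x y = 1 -> Lambda x y = 0.
Proof.
by move=> xy1; rewrite /Lambda /geod xy1 acos1 /Lambda0 min_l ?mulr0 // subr0 ltW ?pi_gt0.
Qed.

Lemma Lambda_dotN1 x y : dot x y = -1 -> Lambda x y = 0.
Proof.
by move=> xyN1; rewrite /Lambda /geod xyN1 acosN1 /Lambda0 subrr min_r ?mulr0 // ltW ?pi_gt0.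
Qed.

Lemma geod_sphere x y : on_sphere x -> on_sphere y ->
  0 <= geod x y <= pi /\ cos (geod x y) = dot x y.
Proof. by move=> sx sy; apply: acos_def; rewrite sphere_dot_le1 // sphere_dot_geN1. Qed.

Lemma Lambda_ge0_le1 x y : on_sphere x -> on_sphere y -> 0 <= Lambda x y <= 1.
Proof. by move=> sx sy; apply: Lambda0_ge0_le1; case: (geod_sphere sx sy). Qed.

Lemma Lambda_eq1 x y : on_sphere x -> on_sphere y -> Lambda x y = 1 -> dot x y = 0.
Proof.
move=> sx sy L1; case: (geod_sphere sx sy) => geod_pi <-.
by rewrite (Lambda0_eq1 geod_pi L1) cos_pihalf.
Qed.

Lemma Lambda_eq0 x y : on_sphere x -> on_sphere y -> Lambda x y = 0 ->
  dot x y = 1 \/ dot x y = -1.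
Proof.
move=> sx sy L0; case: (geod_sphere sx sy) => geod_pi <-.
by case: (Lambda0_eq0 geod_pi L0) => ->; [left; exact: cos0 | right; exact: cospi].
Qed.

Lemma Lambda_powR_le x y a : on_sphere x -> on_sphere y -> 1 <= a ->
  0 <= Lambda x y - Lambda x y `^ a <= a - 1.
Proof.
move=> sx sy a1; have L01 := Lambda_ge0_le1 sx sy.
by rewrite subr_ge0 powR_le_self //= subr_powR_le.
Qed.

Lemma Lambda_powR_eq x y a : on_sphere x -> on_sphere y -> 1 < a ->
  Lambda x y `^ a = Lambda x y -> [\/ dot x y = 0, dot x y = 1 | dot x y = -1].
Proof.
move=> sx sy a1 La; case: (powR_eq_self (Lambda_ge0_le1 sx sy) a1 La) => [L0|L1].
  by case: (Lambda_eq0 sx sy L0); [constructor 2 | constructor 3].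
by constructor 1; apply: Lambda_eq1.
Qed.

Lemma Lambda_axis_powR v j k x y a : orthonormal_basis v ->
  on_axis v j x -> on_axis v k y -> 0 < a -> Lambda x y `^ a = (j != k)%:R.
Proof.
move=> onb xj yk a_gt0; case: (eqVneq j k) yk => [<- {k} | jk] yk.
  rewrite (_ : Lambda x y = 0) ?powR0 ?gt_eqF ?eqxx //.
  by case: (on_axis_dot onb xj yk); rewrite eqxx; [apply: Lambda_dot1 | apply: Lambda_dotN1].
rewrite (_ : Lambda x y = 1) ?powR1 ?jk //; apply: Lambda_dot0.
by case: (on_axis_dot onb xj yk); rewrite (negbTE jk) ?oppr0.
Qed.

End Lambda.

Section FiniteMeasures.
Variables (R : realType) (d : nat).
Local Notation vec := (vec R d).
Local Notation fmeas := (fmeas R d).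
Implicit Types (mu nu : fmeas) (x z w : vec) (a : R).

Definition supp mu : seq vec := undup (map fst mu).

Lemma supp_uniq mu : uniq (supp mu).
Proof. exact: undup_uniq. Qed.

Lemma mem_supp mu p : p \in mu -> p.1 \in supp mu.
Proof. by move=> p_mu; rewrite mem_undup (map_f fst p_mu). Qed.

Lemma mass_supp mu x : mass mu x != 0 -> x \in supp mu.
Proof.
apply: contraR => x_supp; rewrite /mass big1_seq // => p /andP[/eqP px p_mu].
by move: x_supp; rewrite -px mem_supp.
Qed.

Lemma sum_mass mu (S : seq vec) (G : vec -> R) : uniq S ->
  {subset supp mu <= S} ->
  \sum_(p <- mu) p.2 * G p.1 = \sum_(z <- S) mass mu z * G z.
Proof.
move=> S_uniq suppS; rewrite /mass.
under [RHS]eq_bigr do rewrite mulr_suml big_mkcond /=.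
rewrite exchange_big /=; apply: eq_big_seq => p p_mu.
rewrite (bigD1_seq p.1) ?suppS ?mem_supp //= eqxx big1 ?addr0 // => z zp.
by rewrite eq_sym (negbTE zp).
Qed.

Lemma total_mass mu (S : seq vec) : uniq S -> {subset supp mu <= S} ->
  \sum_(p <- mu) p.2 = \sum_(z <- S) mass mu z.
Proof.
move=> S_uniq suppS; rewrite -(eq_bigr _ (fun p _ => mulr1 p.2)).
by rewrite (sum_mass (fun=> 1) S_uniq suppS); under eq_bigr do rewrite mulr1.
Qed.

Lemma energy_mass a mu (S : seq vec) : uniq S -> {subset supp mu <= S} ->
  energy a mu =
  2^-1 * \sum_(z <- S) \sum_(w <- S) mass mu z * mass mu w * Lambda z w `^ a.
Proof.
move=> S_uniq suppS; rewrite /energy; congr (_ * _).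
transitivity (\sum_(p <- mu) p.2 * \sum_(w <- S) mass mu w * Lambda p.1 w `^ a).
  apply: eq_bigr => p _.
  rewrite -(sum_mass (fun w => Lambda p.1 w `^ a) S_uniq suppS) mulr_sumr.
  by apply: eq_bigr => q _; rewrite mulrA.
rewrite (sum_mass (fun z => \sum_(w <- S) mass mu w * Lambda z w `^ a) S_uniq suppS).
apply: eq_bigr => z _.
by rewrite mulr_sumr; apply: eq_bigr => w _; rewrite mulrA.
Qed.

Lemma subset_supp_cat mu nu : {subset supp mu <= supp (mu ++ nu)} /\
  {subset supp nu <= supp (mu ++ nu)}.
Proof. by split=> x; rewrite !mem_undup map_cat mem_cat => ->; rewrite ?orbT. Qed.

Lemma same_energy a mu nu : same_measure mu nu -> energy a mu = energy a nu.
Proof.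
move=> mu_nu; have [mu_cat nu_cat] := subset_supp_cat mu nu.
rewrite (energy_mass a (supp_uniq _) mu_cat) (energy_mass a (supp_uniq _) nu_cat).
by congr (_ * _); apply: eq_bigr => z _; apply: eq_bigr => w _; rewrite !mu_nu.
Qed.

Lemma same_total mu nu : same_measure mu nu -> \sum_(p <- mu) p.2 = \sum_(p <- nu) p.2.
Proof.
move=> mu_nu; have [mu_cat nu_cat] := subset_supp_cat mu nu.
rewrite (total_mass (supp_uniq _) mu_cat) (total_mass (supp_uniq _) nu_cat).
by apply: eq_bigr => z _; rewrite mu_nu.
Qed.

Lemma same_in_Pfin mu nu : same_measure mu nu -> in_Pfin nu -> in_Pfin mu.
Proof.
move=> mu_nu [nu_ge0 [nu_sphere nu1]]; split; [|split].
- by move=> x; rewrite mu_nu.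
- by move=> x; rewrite mu_nu; apply: nu_sphere.
- by rewrite (same_total mu_nu).
Qed.

Lemma in_Pfin_mass1 mu : in_Pfin mu -> \sum_(z <- supp mu) mass mu z = 1.
Proof. by case=> _ [_ mu1]; rewrite -(total_mass (supp_uniq mu)). Qed.

Lemma energy_subr b a mu : energy b mu - energy a mu =
  2^-1 * \sum_(z <- supp mu) \sum_(w <- supp mu)
           mass mu z * mass mu w * (Lambda z w `^ b - Lambda z w `^ a).
Proof.
rewrite !(energy_mass _ (supp_uniq mu) (fun _ => id)) -mulrBr -sumrB.
by congr (_ * _); apply: eq_bigr => z _; rewrite -sumrB; apply: eq_bigr => w _; ring.
Qed.

Lemma mass_Lambda_powR_le mu a z w : in_Pfin mu -> 1 <= a ->
  0 <= mass mu z * mass mu w * (Lambda z w `^ 1 - Lambda z w `^ a)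
    <= mass mu z * mass mu w * (a - 1).
Proof.
move=> [mu_ge0 [mu_sphere _]] a1.
have [->|z_mu] := eqVneq (mass mu z) 0; first by rewrite !mul0r lexx.
have [->|w_mu] := eqVneq (mass mu w) 0; first by rewrite mulr0 !mul0r lexx.
have sz := mu_sphere _ z_mu; have sw := mu_sphere _ w_mu.
rewrite powRr1; last by case/andP: (Lambda_ge0_le1 sz sw).
have /andP[L_ge0 L_le] := Lambda_powR_le sz sw a1.
by rewrite mulr_ge0 ?mulr_ge0 //= ler_wpM2l ?mulr_ge0.
Qed.

Lemma energy_le_energy1 a mu : in_Pfin mu -> 1 <= a -> energy a mu <= energy 1 mu.
Proof.
move=> mu_Pfin a1; rewrite -subr_ge0 energy_subr mulr_ge0 ?invr_ge0 ?ler0n //.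
apply: sumr_ge0 => z _; apply: sumr_ge0 => w _.
by case/andP: (mass_Lambda_powR_le z w mu_Pfin a1).
Qed.

Lemma energy1_le_energy a mu : in_Pfin mu -> 1 <= a ->
  energy 1 mu <= energy a mu + 2^-1 * (a - 1).
Proof.
move=> mu_Pfin a1; rewrite -lerBlDl energy_subr ler_wpM2l ?invr_ge0 ?ler0n //.
apply: (@le_trans _ _ (\sum_(z <- supp mu) \sum_(w <- supp mu)
                         mass mu z * mass mu w * (a - 1))).
  apply: ler_sum => z _; apply: ler_sum => w _.
  by case/andP: (mass_Lambda_powR_le z w mu_Pfin a1).
under eq_bigr do rewrite -mulr_suml -mulr_sumr (in_Pfin_mass1 mu_Pfin) mulr1.
by rewrite -mulr_suml in_Pfin_mass1 // mul1r.
Qed.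

Lemma Lambda_powR_of_energy_eq a mu z w : in_Pfin mu -> 1 <= a ->
  energy a mu = energy 1 mu -> mass mu z != 0 -> mass mu w != 0 ->
  Lambda z w `^ a = Lambda z w.
Proof.
move=> mu_Pfin a1 Ea z_mu w_mu.
have term_ge0 z' w' := proj1 (andP (mass_Lambda_powR_le z' w' mu_Pfin a1)).
move/eqP: Ea; rewrite eq_sym -subr_eq0 energy_subr mulf_eq0 invr_eq0 pnatr_eq0 /=.
rewrite psumr_eq0 => [/allP/(_ z (mass_supp z_mu))|z' _]; last first.
  by apply: sumr_ge0 => w' _; apply: term_ge0.
rewrite /= psumr_eq0 => [/allP/(_ w (mass_supp w_mu))|w' _]; last exact: term_ge0.
case: mu_Pfin => _ [mu_sphere _].
rewrite /= !mulf_eq0 (negbTE z_mu) (negbTE w_mu) subr_eq0 powRr1 => [/eqP //|].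
by case/andP: (Lambda_ge0_le1 (mu_sphere _ z_mu) (mu_sphere _ w_mu)).
Qed.

End FiniteMeasures.

Section Maximizers.
Variables (R : realType) (d : nat).
Local Notation fmeas := (fmeas R d).
Variable P : fmeas -> Prop.
Hypothesis P_Pfin : forall mu, P mu -> in_Pfin mu.
Implicit Types (mu ref : fmeas) (a : R).

Lemma maximizes_energy_of_energy1 a mu : 1 <= a -> energy a mu = energy 1 mu ->
  maximizes P (energy 1) mu -> maximizes P (energy a) mu.
Proof.
move=> a1 Ea [P_mu max1]; split=> // nu P_nu.
by rewrite Ea; apply: le_trans (max1 _ P_nu); apply: energy_le_energy1 (P_Pfin P_nu) a1.
Qed.

(* Let [a] tend to [1] in [E_1 <= E_a + (a - 1) / 2]. *)
Lemma maximizes_energy1_of_energy mu :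
  (forall a, 1 < a -> maximizes P (energy a) mu /\ energy a mu = energy 1 mu) ->
  maximizes P (energy 1) mu.
Proof.
move=> max_a; split=> [|nu P_nu]; first by case: (max_a 2) => [|[]//]; lra.
apply/ler_addgt0Pr => e e_gt0; have a1 : 1 < 1 + 2 * e by lra.
have [[_ max] Ea] := max_a _ a1.
have := energy1_le_energy (P_Pfin P_nu) (ltW a1); have := max _ P_nu; lra.
Qed.

Lemma maximizer_energy_eq a mu ref : 1 <= a -> energy a ref = energy 1 ref ->
  maximizes P (energy 1) ref -> maximizes P (energy a) mu ->
  energy a mu = energy 1 mu /\ energy 1 mu = energy 1 ref.
Proof.
move=> a1 Ea_ref [P_ref max1] [P_mu maxa].
have := energy_le_energy1 (P_Pfin P_mu) a1; have := max1 _ P_mu; have := maxa _ P_ref.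
by rewrite Ea_ref; lra.
Qed.

Variable Q : fmeas -> Prop.
Hypothesis Q_energy : forall mu, Q mu -> forall a, 0 < a -> energy a mu = energy 1 mu.

Lemma maximizers_iff ref : Q ref ->
  (forall a mu, 1 < a -> P mu -> energy a mu = energy 1 mu ->
     energy 1 mu = energy 1 ref -> Q mu) ->
  (forall mu, Q mu -> maximizes P (energy 1) mu) <->
  (forall a, 1 < a -> forall mu, maximizes P (energy a) mu <-> Q mu).
Proof.
move=> Q_ref rigid; split=> [max1 a a1 mu|maxa mu Q_mu].
  have a_gt0 : 0 < a by apply: lt_trans a1.
  split=> [maxa|Q_mu].
    have [Ea E1] := maximizer_energy_eq (ltW a1) (Q_energy Q_ref a_gt0) (max1 _ Q_ref) maxa.
    exact: rigid a1 maxa.1 Ea E1.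
  exact: maximizes_energy_of_energy1 (ltW a1) (Q_energy Q_mu a_gt0) (max1 _ Q_mu).
apply: maximizes_energy1_of_energy => a a1; split; first exact/maxa.
by apply: Q_energy; rewrite // (lt_trans ltr01).
Qed.

End Maximizers.

Section Axes.
Variables (R : realType) (d : nat).
Local Notation vec := (vec R d).
Implicit Types (us s : seq vec) (u w z : vec).

Definition orthonormal_seq us := [/\ uniq us, {in us, forall u, on_sphere u} &
  {in us &, forall u w, u != w -> dot u w = 0}].

Definition seq_mx us : 'M[R]_(size us, d.+1) := \matrix_(i, k) (nth 0 us i) 0 k.

Lemma seq_mx_dot us w j : (w *m (seq_mx us)^T) 0 j = dot w (nth 0 us j).
Proof. by rewrite !mxE; apply: eq_bigr => k _; rewrite !mxE. Qed.

Lemma orthonormal_seq_nth us (i j : nat) : orthonormal_seq us ->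
  (i < size us)%N -> (j < size us)%N -> dot (nth 0 us i) (nth 0 us j) = (i == j)%:R.
Proof.
move=> [us_uniq us_sphere us_orth] ius jus; have [<-|ij] := eqVneq i j.
  by apply: us_sphere; rewrite mem_nth.
by apply: us_orth; rewrite ?mem_nth ?nth_uniq.
Qed.

Lemma orthonormal_seq_size us : orthonormal_seq us -> (size us <= d.+1)%N.
Proof.
move=> us_on; have gram : seq_mx us *m (seq_mx us)^T = 1%:M.
  apply/matrixP => i j; rewrite !mxE -(orthonormal_seq_nth us_on (ltn_ord i) (ltn_ord j)).
  by apply: eq_bigr => k _; rewrite !mxE.
have := mxrankM_maxl (seq_mx us) (seq_mx us)^T; rewrite gram mxrank1 => size_le.
exact: leq_trans size_le (rank_leq_col _).
Qed.

(* A nonzero row of the kernel of [(seq_mx us)^T], normalised. *)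
Lemma orthonormal_seq_extend us : orthonormal_seq us -> (size us < d.+1)%N ->
  exists2 w, on_sphere w & {in us, forall u, dot w u = 0}.
Proof.
move=> us_on us_small; set K := kermx (seq_mx us)^T.
have [i Ki_neq0] : exists i, row i K != 0.
  apply/existsP; rewrite -negb_forall; apply/negP => /forallP K0.
  have : (0 < \rank K)%N.
    by rewrite mxrank_ker mxrank_tr subn_gt0 (leq_ltn_trans (rank_leq_row _)).
  rewrite lt0n mxrank_eq0 => /eqP; apply; apply/row_matrixP => i.
  by rewrite row0; apply/eqP; move: (K0 i).
have w0_orth : {in us, forall u, dot (row i K) u = 0}.
  move=> u u_us; rewrite -(nth_index 0 u_us); rewrite -index_mem in u_us.
  by rewrite -(seq_mx_dot _ (Ordinal u_us)) -row_mul mulmx_ker row0 mxE.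
have w0_gt0 : 0 < dot (row i K) (row i K).
  rewrite lt_neqAle dotxx_ge0 andbT eq_sym; apply: contra Ki_neq0 => /eqP/dotxx_eq0->.
  exact: eqxx.
exists ((Num.sqrt (dot (row i K) (row i K)))^-1 *: row i K).
  rewrite /on_sphere dotZl dotC dotZl mulrA -expr2 exprVn sqr_sqrtr ?ltW //.
  by rewrite mulVf // gt_eqF.
by move=> u u_us; rewrite dotZl (w0_orth u u_us) mulr0.
Qed.

Lemma orthonormal_seq_complete us : orthonormal_seq us ->
  exists2 us', orthonormal_seq us' & size us' = d.+1 /\ {subset us <= us'}.
Proof.
move def_n : (d.+1 - size us)%N => n; elim: n us def_n => [|n IHn] us def_n us_on.
  exists us => //; split => //.
  by apply/eqP; rewrite eqn_leq orthonormal_seq_size //= -subn_eq0 def_n.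
have us_small : (size us < d.+1)%N by rewrite -subn_gt0 def_n.
have [w w_sphere w_orth] := orthonormal_seq_extend us_on us_small.
have w_us : w \notin us.
  by apply/negP => /w_orth; rewrite w_sphere => /eqP; rewrite oner_eq0.
have wus_on : orthonormal_seq (w :: us).
  case: us_on => us_uniq us_sphere us_orth; split.
  - by rewrite /= w_us us_uniq.
  - by move=> u; rewrite inE => /predU1P[->|/us_sphere].
  - move=> u y; rewrite !inE => /predU1P[->|u_us] /predU1P[->|y_us]; rewrite ?eqxx //.
    + by move=> _; apply: w_orth.
    + by move=> _; rewrite dotC; apply: w_orth.
    + exact: us_orth.
have [|us' us'_on [size_us' wus_us']] := IHn (w :: us) _ wus_on.
  by rewrite /= subnS def_n.
by exists us' => //; split => // u u_us; apply: wus_us'; rewrite inE u_us orbT.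
Qed.

(* Greedy choice: keep a point of [s] iff it is orthogonal to all points kept so far. *)
Lemma axes_seq s : {in s, forall z, on_sphere z} ->
  {in s &, forall z w, [\/ dot z w = 0, dot z w = 1 | dot z w = -1]} ->
  exists us, [/\ orthonormal_seq us, {subset us <= s} &
    {in s, forall z, exists2 u, u \in us & z = u \/ z = - u}].
Proof.
elim: s => [|z s IHs] zs_sphere zs_dot; first by exists [::].
have s_sub : {subset s <= z :: s} by move=> y y_s; rewrite inE y_s orbT.
have z_zs : z \in z :: s by rewrite inE eqxx.
have [us [us_on us_s s_axes]] := IHs (sub_in1 s_sub zs_sphere) (sub_in2 s_sub zs_dot).
have [/hasP[u u_us zu_neq0]|/hasPn z_orth] := boolP (has (fun u => dot z u != 0) us).
  exists us; split => // [y /us_s/s_sub //|y]; rewrite inE => /predU1P[->|/s_axes //].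
  have u_zs := s_sub _ (us_s _ u_us).
  have [sz su] := (zs_sphere _ z_zs, zs_sphere _ u_zs).
  exists u => //; case: (zs_dot z u z_zs u_zs) => [zu0|zu1|zuN1].
  - by rewrite zu0 eqxx in zu_neq0.
  - by left; apply: sphere_dot_eq1.
  - by right; apply: sphere_dot_eqN1; rewrite // dotC.
have z_us : z \notin us.
  by apply/negP => /z_orth; rewrite (zs_sphere _ z_zs) oner_eq0.
case: us_on => us_uniq us_sphere us_orth.
exists (z :: us); split; first split.
- by rewrite /= z_us us_uniq.
- by move=> u; rewrite inE => /predU1P[->|/us_sphere //]; apply: zs_sphere.
- move=> u y; rewrite !inE => /predU1P[->|u_us] /predU1P[->|y_us]; rewrite ?eqxx //.
  + by move=> _; apply/eqP/negPn/z_orth.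
  + by move=> _; rewrite dotC; apply/eqP/negPn/z_orth.
  + exact: us_orth.
- by move=> y; rewrite !inE => /predU1P[->|/us_s ->]; rewrite ?eqxx ?orbT.
- move=> y; rewrite inE => /predU1P[->|/s_axes[u u_us yu]].
    by exists z; [rewrite inE eqxx | left].
  by exists u; rewrite // inE u_us orbT.
Qed.

Lemma axes_cover s : {in s, forall z, on_sphere z} ->
  {in s &, forall z w, [\/ dot z w = 0, dot z w = 1 | dot z w = -1]} ->
  exists2 v, orthonormal_basis v & {in s, forall z, exists j, on_axis v j z}.
Proof.
move=> s_sphere s_dot; have [us [us_on _ s_axes]] := axes_seq s_sphere s_dot.
have [us' us'_on [size_us' us_us']] := orthonormal_seq_complete us_on.
exists (fun j => nth 0 us' j).
  by move=> j k; rewrite (orthonormal_seq_nth us'_on) ?size_us'.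
move=> z /s_axes[u /us_us' u_us' zu].
have u_idx : (index u us' < d.+1)%N by rewrite -[X in (_ < X)%N]size_us' index_mem.
by exists (Ordinal u_idx); rewrite /on_axis /= nth_index.
Qed.

End Axes.

Section Fibres.
Local Open Scope nat_scope.

Definition fibre_size (T K : finType) (f : T -> K) (k : K) : nat := \sum_(i | f i == k) 1.

Lemma sum_fibre_size (T K : finType) (f : T -> K) : \sum_k fibre_size f k = #|T|.
Proof. by rewrite -sum1_card (partition_big f predT). Qed.

Lemma count_map_fibre_size n (K : finType) (f : 'I_n -> K) (P : pred K) :
  count P [seq f i | i <- enum 'I_n] = \sum_(k | P k) fibre_size f k.
Proof.
rewrite -sum1_count big_map big_enum_cond /= (partition_big f P) //=.
apply: eq_bigr => k Pk; apply: eq_bigl => i.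
by case: (f i =P k) => [->|_]; rewrite ?Pk ?andbF.
Qed.

Lemma perm_of_fibre_size n (K : finType) (f g : 'I_n -> K) :
  fibre_size f =1 fibre_size g -> exists s : {perm 'I_n}, forall i, f i = g (s i).
Proof.
move=> fg; have /tuple_permP[s fgs] : perm_eq [tuple f i | i < n] [tuple g i | i < n].
  apply/seq.permP => P.
  rewrite -(map_tnth_enum [tuple f i | i < n]) -(map_tnth_enum [tuple g i | i < n]).
  rewrite (eq_map (tnth_mktuple f)) (eq_map (tnth_mktuple g)) !count_map_fibre_size.
  by apply: eq_bigr => k _; apply: fg.
by exists s => i; have := congr1 (fun t => nth (f i) t i) fgs; rewrite !nth_mktuple tnth_mktuple.
Qed.

Definition balanced m (c : 'I_m -> nat) (q : nat) := forall j, c j = q \/ c j = q.+1.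

(* [x * x + q * (q + 1) - (2 q + 1) x = (x - q) (x - q - 1)] *)
Lemma balance_leqif q x :
  (2 * q + 1) * x <= x * x + q * q.+1 ?= iff (x == q) || (x == q.+1).
Proof.
split; first by case: (leqP x q) => x_q;
  [have : 0 <= (q - x) * (q.+1 - x) by [] | have : 0 <= (x - q) * (x - q.+1) by []]; nia.
apply/eqP/idP => [x_eq|]; last by case/orP => /eqP->; nia.
have [->|->] : x = q \/ x = q.+1 by nia.
  by rewrite eqxx.
by rewrite eqxx orbT.
Qed.

Lemma balanced_of_sum_sqr_le m (n c : 'I_m -> nat) q :
  \sum_j n j = \sum_j c j -> \sum_j n j * n j <= \sum_j c j * c j ->
  balanced c q -> balanced n q.
Proof.
move=> sum_nc sqr_nc c_bal j.
have /geq_leqif n_eq := leqif_sum (fun i (_ : true) => balance_leqif q (n i)).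
have c_eq i : (2 * q + 1) * c i = c i * c i + q * q.+1.
  by apply/eqP; rewrite (balance_leqif q (c i)).2; case: (c_bal i) => ->; rewrite eqxx ?orbT.
have : \sum_i (n i * n i + q * q.+1) <= \sum_i (2 * q + 1) * n i.
  rewrite -big_distrr /= sum_nc big_distrr /= (eq_bigr _ (fun i _ => c_eq i)).
  by rewrite !big_split /= leq_add2r.
by rewrite n_eq => /forallP/(_ j)/orP[]/eqP; [left|right].
Qed.

Lemma balanced_perm m (n c : 'I_m -> nat) q : balanced n q -> balanced c q ->
  \sum_j n j = \sum_j c j -> exists p : {perm 'I_m}, forall j, c j = n (p j).
Proof.
move=> n_bal c_bal sum_nc.
have split_bal (f : 'I_m -> nat) : balanced f q -> forall j, f j = q + (f j == q.+1).
  by move=> f_bal j; case: (f_bal j) => ->; rewrite ?eqxx ?addn1 // ltn_eqF ?addn0.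
have sum_bal (f : 'I_m -> nat) :
    balanced f q -> \sum_j f j = m * q + fibre_size (fun j => f j == q.+1) true.
  move=> f_bal; rewrite (eq_bigr _ (fun j _ => split_bal f f_bal j)) big_split /=.
  rewrite sum_nat_const card_ord; congr (_ + _).
  by rewrite /fibre_size [RHS]big_mkcond; apply: eq_bigr => j _; case: (f j == q.+1).
have fibre_bool (f : 'I_m -> bool) : fibre_size f true + fibre_size f false = m.
  by have := sum_fibre_size f; rewrite big_bool card_ord.
pose n' j := n j == q.+1; pose c' j := c j == q.+1.
have top_eq : fibre_size c' true = fibre_size n' true.
  by apply/eqP; rewrite -(eqn_add2l (m * q)) -!sum_bal // sum_nc.
have [p cnp] : exists p : {perm 'I_m}, forall j, c' j = n' (p j).
  apply: perm_of_fibre_size => -[] //.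
  by apply/eqP; rewrite -(eqn_add2l (fibre_size c' true)) fibre_bool top_eq fibre_bool.
by exists p => j; rewrite (split_bal c c_bal) (split_bal n n_bal (p j)) -/(c' j) cnp.
Qed.

Lemma fibre_size_modidx d N (j : 'I_d.+1) :
  fibre_size (@modidx d N) j = N %/ d.+1 + (j < N %% d.+1).
Proof.
have modidxE (i : 'I_N) : (modidx d i == j) = (i %% d.+1 == j).
  by rewrite /modidx -val_eqE /= inordK // ltn_pmod.
rewrite /fibre_size (eq_bigl _ _ modidxE) -(big_mkord (fun i => i %% d.+1 == j) (fun=> 1)).
elim: N {modidxE} => [|N IHN]; first by rewrite big_geq // div0n mod0n.
rewrite big_mkcond big_nat_recr //= -big_mkcond IHN.
by case: (N %% d.+1 =P j) => N_j; have := ltn_ord j; nia.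
Qed.

Lemma modidx_balanced d N : balanced (fibre_size (@modidx d N)) (N %/ d.+1).
Proof.
by move=> j; rewrite fibre_size_modidx; case: (j < _); [right; rewrite addn1 | left; rewrite addn0].
Qed.

Lemma perm_modidx_of_sum_sqr_le d N (kap : 'I_N -> 'I_d.+1) :
  \sum_j fibre_size kap j * fibre_size kap j <=
    \sum_j fibre_size (@modidx d N) j * fibre_size (@modidx d N) j ->
  exists (p : {perm 'I_d.+1}) (s : {perm 'I_N}), forall i, kap (s i) = p (modidx d i).
Proof.
move=> sqr_le; have sum_eq : \sum_j fibre_size kap j = \sum_j fibre_size (@modidx d N) j.
  by rewrite !sum_fibre_size.
have kap_bal := balanced_of_sum_sqr_le sum_eq sqr_le (@modidx_balanced d N).
have [p fibre_p] := balanced_perm kap_bal (@modidx_balanced d N) sum_eq.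
have [s modidx_s] : exists s : {perm 'I_N}, forall i, modidx d i = (p^-1)%g (kap (s i)).
  apply: (perm_of_fibre_size (g := fun i => (p^-1)%g (kap i))) => j.
  rewrite fibre_p; apply: eq_bigl => i.
  by rewrite -(inj_eq (@perm_inj _ p)) permKV.
by exists p, s => i; rewrite modidx_s permKV.
Qed.

End Fibres.

Lemma sum_mul_neq (T : finType) (R : comPzRingType) (W : T -> R) :
  \sum_i \sum_j W i * W j * (i != j)%:R = (\sum_i W i) ^+ 2 - \sum_i W i ^+ 2.
Proof.
rewrite expr2 mulr_suml -sumrB; apply: eq_bigr => i _.
rewrite mulr_sumr (bigD1 i) //= [X in _ = X - _](bigD1 i) //= eqxx mulr0 add0r.
rewrite addrAC expr2 subrr add0r; apply: eq_bigr => j ji.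
by rewrite eq_sym ji mulr1.
Qed.

Lemma sum_sqr_eq_inv (F : realFieldType) n (w : 'I_n.+1 -> F) :
  \sum_i w i = 1 -> \sum_i w i ^+ 2 = n.+1%:R^-1 -> forall i, w i = n.+1%:R^-1.
Proof.
move=> sum1 sum_sqr; set c := n.+1%:R^-1.
have cn : c *+ n.+1 = 1 by rewrite -mulr_natr mulVf // pnatr_eq0.
have dev0 : \sum_i (w i - c) ^+ 2 = 0.
  rewrite (eq_bigr (fun i => w i ^+ 2 + - (2 * c) * w i + c ^+ 2)); last by move=> i _; ring.
  rewrite !big_split /= -mulr_sumr sum1 sum_sqr sumr_const card_ord.
  by rewrite expr2 -mulrnAr cn -/c; ring.
move=> i; apply/eqP; rewrite -subr_eq0 -sqrf_eq0; apply/eqP.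
by apply: (psumr_eq0P _ dev0) => // j _; rewrite sqr_ge0.
Qed.

Section CrossMeasures.
Variables (R : realType) (d : nat).
Local Notation vec := (vec R d).
Local Notation fmeas := (fmeas R d).
Implicit Types (mu : fmeas) (x z : vec) (v : 'I_d.+1 -> vec) (A B : 'I_d.+1 -> R) (a : R).

Definition axis_supported v mu := forall x, mass mu x != 0 -> exists j, on_axis v j x.

Definition axis_mass v mu j := mass mu (v j) + mass mu (- v j).

Lemma sum_cross_combination v A B (G : vec * R -> R) :
  \sum_(p <- cross_combination v A B) G p = \sum_i (G (v i, A i) + G (- v i, B i)).
Proof.
rewrite /cross_combination big_flatten big_map big_enum /=.
by apply: eq_bigr => i _; rewrite !big_cons big_nil addr0.
Qed.

Lemma mass_cross_combination v A B x : mass (cross_combination v A B) x =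
  \sum_i ((v i == x)%:R * A i + (- v i == x)%:R * B i).
Proof.
rewrite /mass /cross_combination big_flatten big_map big_enum /=.
apply: eq_bigr => i _; rewrite !big_cons big_nil /=.
by case: (v i == x); case: (- v i == x); rewrite ?mul1r ?mul0r ?addr0 ?add0r.
Qed.

Lemma cross_combination_axis_supported v A B : axis_supported v (cross_combination v A B).
Proof.
move=> x; rewrite mass_cross_combination => mass_neq0.
have [/existsP[i /orP[]/eqP <-]|/existsPn off] := boolP [exists i, (v i == x) || (- v i == x)].
- by exists i; left.
- by exists i; right.
move: mass_neq0; rewrite big1 ?eqxx // => i _.
by have /norP[/negbTE -> /negbTE ->] := off i; rewrite !mul0r addr0.
Qed.

Lemma mass_cross_combination_axis v A B j : orthonormal_basis v ->
  mass (cross_combination v A B) (v j) = A j /\ mass (cross_combination v A B) (- v j) = B j.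
Proof.
move=> onb; rewrite !mass_cross_combination.
split; rewrite (bigD1 j) // big1 /= => [|i ij].
- by rewrite eqxx onb_oppr_neq // mul1r mul0r !addr0.
- by rewrite onb_inj // (negbTE ij) onb_oppr_neq // !mul0r addr0.
- by rewrite eqxx eq_sym onb_oppr_neq // mul1r mul0r add0r addr0.
- by rewrite eqr_opp onb_inj // (negbTE ij) eq_sym onb_oppr_neq // !mul0r addr0.
Qed.

Lemma same_cross_combination v mu : orthonormal_basis v -> axis_supported v mu ->
  same_measure mu (cross_combination v (fun j => mass mu (v j)) (fun j => mass mu (- v j))).
Proof.
move=> onb mu_axes x.
have cc_axis j := mass_cross_combination_axis
  (fun j => mass mu (v j)) (fun j => mass mu (- v j)) j onb.
have [mass0|/mu_axes[j [->|->]]] := eqVneq (mass mu x) 0; last 2 first.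
- by rewrite (cc_axis j).1.
- by rewrite (cc_axis j).2.
rewrite mass0; apply/esym/eqP/contraT => /[dup] /cross_combination_axis_supported[j [xj|xj]];
  by rewrite xj in mass0 *; rewrite ?(cc_axis j).1 ?(cc_axis j).2 /= mass0 eqxx.
Qed.

Lemma energy_cross_combination a v A B : orthonormal_basis v -> 0 < a ->
  energy a (cross_combination v A B) =
  2^-1 * ((\sum_i (A i + B i)) ^+ 2 - \sum_i (A i + B i) ^+ 2).
Proof.
move=> onb a_gt0; rewrite -sum_mul_neq /energy sum_cross_combination; congr (_ * _).
apply: eq_bigr => i _; rewrite !sum_cross_combination -big_split /=.
apply: eq_bigr => j _ /=.
have axis_v k : on_axis v k (v k) by left.
have axis_Nv k : on_axis v k (- v k) by right.
rewrite (Lambda_axis_powR onb (axis_v i) (axis_v j) a_gt0).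
rewrite (Lambda_axis_powR onb (axis_v i) (axis_Nv j) a_gt0).
rewrite (Lambda_axis_powR onb (axis_Nv i) (axis_v j) a_gt0).
by rewrite (Lambda_axis_powR onb (axis_Nv i) (axis_Nv j) a_gt0); ring.
Qed.

Lemma energy_axis_supported a v mu : orthonormal_basis v -> axis_supported v mu ->
  in_Pfin mu -> 0 < a -> energy a mu = 2^-1 * (1 - \sum_j axis_mass v mu j ^+ 2).
Proof.
move=> onb mu_axes [_ [_ mu1]] a_gt0; have mu_cc := same_cross_combination onb mu_axes.
rewrite (same_energy a mu_cc) energy_cross_combination //.
by have := same_total mu_cc; rewrite sum_cross_combination mu1 => <-; rewrite expr1n.
Qed.

Lemma mass_empirical N (x : 'I_N -> vec) z :
  mass (empirical x) z = \sum_(i | x i == z) N%:R^-1.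
Proof. by rewrite /mass /empirical big_map big_enum_cond. Qed.

Lemma empirical_in_Pfin N (x : 'I_N -> vec) : (0 < N)%N -> (forall i, on_sphere (x i)) ->
  in_Pfin (empirical x).
Proof.
move=> N_gt0 x_sphere; split; [|split].
- by move=> z; rewrite mass_empirical; apply: sumr_ge0 => i _; rewrite invr_ge0 ler0n.
- move=> z; rewrite mass_empirical.
  have [i /eqP <- _|x_neq] := pickP (fun i => x i == z); first exact: x_sphere.
  by rewrite big_pred0 ?eqxx.
- rewrite /empirical big_map big_enum /= sumr_const card_ord -[_ *+ N]mulr_natr mulVf //.
  by rewrite pnatr_eq0 -lt0n.
Qed.

Lemma in_PN_Pfin N mu : (0 < N)%N -> in_PN N mu -> in_Pfin mu.
Proof.
by move=> N_gt0 [x [x_sphere mu_x]]; apply: (same_in_Pfin mu_x); apply: empirical_in_Pfin.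
Qed.

Lemma mass_empirical_neq0 N (x : 'I_N -> vec) i : mass (empirical x) (x i) != 0.
Proof.
have N_gt0 : (0 < N)%N by apply: leq_ltn_trans (ltn_ord i).
rewrite mass_empirical (bigD1 i) //= gt_eqF // ltr_pwDl ?invr_gt0 ?ltr0n //.
by apply: sumr_ge0 => k _; rewrite invr_ge0 ler0n.
Qed.

Lemma axis_mass_empirical v N (x : 'I_N -> vec) (kap : 'I_N -> 'I_d.+1) j :
  orthonormal_basis v -> (forall i, on_axis v (kap i) (x i)) ->
  axis_mass v (empirical x) j = (fibre_size kap j)%:R / N%:R.
Proof.
move=> onb x_axes; rewrite /axis_mass !mass_empirical /fibre_size natr_sum mulr_suml.
rewrite (big_mkcond (fun i => x i == v j)) (big_mkcond (fun i => x i == - v j)).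
rewrite (big_mkcond (fun i => kap i == j)) -big_split; apply: eq_bigr => i _ /=.
have [->|->] := x_axes i.
  by rewrite onb_inj // (eq_sym (v _)) onb_oppr_neq // addr0 mul1r.
by rewrite onb_oppr_neq // eqr_opp onb_inj // add0r mul1r.
Qed.

Lemma same_axis_supported v mu nu : same_measure mu nu ->
  axis_supported v nu -> axis_supported v mu.
Proof. by move=> mu_nu nu_axes x; rewrite mu_nu; apply: nu_axes. Qed.

Lemma empirical_axis_supported v N (x : 'I_N -> vec) (kap : 'I_N -> 'I_d.+1) :
  (forall i, on_axis v (kap i) (x i)) -> axis_supported v (empirical x).
Proof.
move=> x_axes z; rewrite mass_empirical.
have [i /eqP <- _|x_neq] := pickP (fun i => x i == z); first by exists (kap i).
by rewrite big_pred0 ?eqxx.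
Qed.

Lemma energy_axis_supported_const a v mu : orthonormal_basis v -> axis_supported v mu ->
  in_Pfin mu -> 0 < a -> energy a mu = energy 1 mu.
Proof. by move=> onb mu_axes mu_Pfin a_gt0; rewrite !(energy_axis_supported onb). Qed.

Lemma cross_config_energy N a mu : (0 < N)%N -> cross_config N mu -> 0 < a ->
  energy a mu = energy 1 mu.
Proof.
move=> N_gt0 [v [x [onb [x_sphere [x_axes mu_x]]]]] a_gt0.
apply: (energy_axis_supported_const onb) => //.
- exact: same_axis_supported mu_x (empirical_axis_supported x_axes).
- exact: same_in_Pfin mu_x (empirical_in_Pfin N_gt0 x_sphere).
Qed.

Lemma cross_fin_in_Pfin mu : cross_fin mu -> in_Pfin mu.
Proof.
move=> [v [A [B [onb [AB mu_AB]]]]]; apply: (same_in_Pfin mu_AB); split; [|split].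
- move=> x; rewrite mass_cross_combination; apply: sumr_ge0 => i _.
  by have [A_ge0 [B_ge0 _]] := AB i; rewrite addr_ge0 // mulr_ge0 ?ler0n.
- by move=> x /cross_combination_axis_supported[j]; apply: on_axis_sphere.
- rewrite (sum_cross_combination v A B snd) /= (eq_bigr _ (fun i _ => (AB i).2.2)).
  by rewrite sumr_const card_ord -[_ *+ _]mulr_natr mulVf // pnatr_eq0.
Qed.

Lemma cross_fin_energy a mu : cross_fin mu -> 0 < a -> energy a mu = energy 1 mu.
Proof.
move=> /[dup] /cross_fin_in_Pfin mu_Pfin [v [A [B [onb [_ mu_AB]]]]] a_gt0.
apply: (energy_axis_supported_const onb) => //.
exact: same_axis_supported mu_AB (@cross_combination_axis_supported v A B).
Qed.

Lemma delta_mx_onb : orthonormal_basis (fun j => delta_mx 0 j : vec).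
Proof.
move=> j k; rewrite /dot (bigD1 j) //= big1 => [|l lj]; rewrite !mxE ?eqxx.
  by rewrite mul1r addr0 eq_sym.
by rewrite (negbTE lj) mul0r.
Qed.

Lemma cross_config_modidx N :
  cross_config N (empirical (fun i : 'I_N => delta_mx 0 (modidx d i) : vec)).
Proof.
exists (fun j => delta_mx 0 j), (fun i : 'I_N => delta_mx 0 (modidx d i)).
split; first exact: delta_mx_onb.
by split; [move=> i; apply: onb_sphere delta_mx_onb | split => // i; left].
Qed.

Lemma cross_fin_uniform : cross_fin
  (cross_combination (fun j => delta_mx 0 j : vec) (fun=> (d.+1)%:R^-1) (fun=> 0)).
Proof.
exists (fun j => delta_mx 0 j), (fun=> (d.+1)%:R^-1), (fun=> 0).
by split; [exact: delta_mx_onb | split => // i; rewrite addr0 invr_ge0 ler0n].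
Qed.

Lemma energy_empirical_axes v N (x : 'I_N -> vec) (kap : 'I_N -> 'I_d.+1) :
  (0 < N)%N -> orthonormal_basis v -> (forall i, on_sphere (x i)) ->
  (forall i, on_axis v (kap i) (x i)) ->
  energy 1 (empirical x) =
  2^-1 * (1 - (\sum_j fibre_size kap j * fibre_size kap j)%:R / N%:R ^+ 2).
Proof.
move=> N_gt0 onb x_sphere x_axes.
rewrite (energy_axis_supported onb (empirical_axis_supported x_axes)
  (empirical_in_Pfin N_gt0 x_sphere) ltr01).
rewrite natr_sum mulr_suml; congr (_ * (1 - _)); apply: eq_bigr => j _.
by rewrite (axis_mass_empirical _ onb x_axes) expr_div_n natrM expr2.
Qed.

End CrossMeasures.

Section Rigidity.
Variables (R : realType) (d : nat).
Local Notation vec := (vec R d).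
Local Notation fmeas := (fmeas R d).
Implicit Types (mu : fmeas) (v : 'I_d.+1 -> vec) (a : R).

Lemma axis_supported_of_energy_eq a mu : in_Pfin mu -> 1 < a ->
  energy a mu = energy 1 mu -> exists2 v, orthonormal_basis v & axis_supported v mu.
Proof.
move=> mu_Pfin a1 Ea; pose s := [seq z <- supp mu | mass mu z != 0].
have mem_s z : (z \in s) = (mass mu z != 0).
  by rewrite mem_filter andb_idr // => /mass_supp.
have s_sphere : {in s, forall z, on_sphere z}.
  by move=> z; rewrite mem_s; case: mu_Pfin => _ [+ _]; apply.
have [v onb s_axes] : exists2 v, orthonormal_basis v & {in s, forall z, exists j, on_axis v j z}.
  apply: axes_cover => // z w z_s w_s.
  apply: (Lambda_powR_eq (s_sphere _ z_s) (s_sphere _ w_s) a1).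
  by apply: (Lambda_powR_of_energy_eq mu_Pfin (ltW a1) Ea); rewrite -mem_s.
by exists v => // z; rewrite -mem_s; apply: s_axes.
Qed.

Lemma cross_fin_of_energy_eq a mu : 1 < a -> in_Pfin mu -> energy a mu = energy 1 mu ->
  energy 1 mu = energy 1
    (cross_combination (fun j => delta_mx 0 j : vec) (fun=> (d.+1)%:R^-1) (fun=> 0)) ->
  cross_fin mu.
Proof.
move=> a1 mu_Pfin Ea E1; have [v onb mu_axes] := axis_supported_of_energy_eq mu_Pfin a1 Ea.
have mu_cc := same_cross_combination onb mu_axes.
have mass1 : \sum_j axis_mass v mu j = 1.
  by have := same_total mu_cc; rewrite sum_cross_combination; case: mu_Pfin => _ [_ ->].
have sqr_mass : \sum_j axis_mass v mu j ^+ 2 = (d.+1)%:R^-1.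
  have cn : (d.+1)%:R^-1 *+ d.+1 = 1 :> R by rewrite -[_ *+ d.+1]mulr_natr mulVf ?pnatr_eq0.
  move: E1; rewrite (energy_axis_supported onb) //.
  rewrite (energy_cross_combination _ _ (@delta_mx_onb R d)) //.
  rewrite !sumr_const card_ord addr0 cn expr1n expr2 -mulrnAr cn mulr1.
  have half_neq0 : 2^-1 != 0 :> R by rewrite invr_eq0 pnatr_eq0.
  by move=> /(mulfI half_neq0) /subrI.
exists v, (fun j => mass mu (v j)), (fun j => mass mu (- v j)).
split=> //; split=> // i; case: mu_Pfin => mu_ge0 _.
by rewrite !mu_ge0; split=> //; split=> //; apply: sum_sqr_eq_inv mass1 sqr_mass i.
Qed.

Lemma cross_config_of_energy_eq N a mu : (0 < N)%N -> 1 < a -> in_PN N mu ->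
  energy a mu = energy 1 mu ->
  energy 1 mu = energy 1 (empirical (fun i : 'I_N => delta_mx 0 (modidx d i) : vec)) ->
  cross_config N mu.
Proof.
move=> N_gt0 a1 mu_PN Ea E1; have mu_Pfin := in_PN_Pfin N_gt0 mu_PN.
have [v onb mu_axes] := axis_supported_of_energy_eq mu_Pfin a1 Ea.
case: mu_PN => y [y_sphere mu_y].
have /fin_all_exists[kap y_axes] : forall i, exists j, on_axis v j (y i).
  by move=> i; apply: mu_axes; rewrite mu_y mass_empirical_neq0.
have [p [s kap_s]] : exists (p : {perm 'I_d.+1}) (s : {perm 'I_N}),
    forall i, kap (s i) = p (modidx d i).
  apply: (@perm_modidx_of_sum_sqr_le d N kap); apply/eq_leq/eqP; rewrite -(eqr_nat R).
  have modidx_axes (i : 'I_N) :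
    on_axis (fun j => delta_mx 0 j : vec) (modidx d i) (delta_mx 0 (modidx d i)) by left.
  move: E1; rewrite (same_energy 1 mu_y) (energy_empirical_axes N_gt0 onb y_sphere y_axes).
  rewrite (energy_empirical_axes N_gt0 (@delta_mx_onb R d) _ modidx_axes) => [|i].
    have half_neq0 : 2^-1 != 0 :> R by rewrite invr_eq0 pnatr_eq0.
    have N2V_neq0 : (N%:R ^+ 2)^-1 != 0 :> R by rewrite invr_eq0 expf_neq0 // pnatr_eq0 -lt0n.
    by move=> /(mulfI half_neq0) /subrI /(mulIf N2V_neq0) ->.
  exact: onb_sphere (@delta_mx_onb R d).
exists (fun j => v (p j)), (fun i => y (s i)); split.
  by move=> j k; rewrite onb (inj_eq perm_inj).
split=> [i|]; first exact: y_sphere.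
split=> [i|z]; first by have := y_axes (s i); rewrite kap_s.
by rewrite mu_y !mass_empirical (reindex_inj (@perm_inj _ s)).
Qed.

End Rigidity.

Theorem proposition1p3 (R : realType) (d : nat) :
  (C1 R d <-> C2 R d) /\ (C1' R d <-> C2' R d).
Proof.
have PN_iff N : (0 < N)%N ->
    (forall mu : fmeas R d, cross_config N mu -> maximizes (in_PN N) (energy 1) mu) <->
    (forall a : R, 1 < a -> forall mu : fmeas R d,
       maximizes (in_PN N) (energy a) mu <-> cross_config N mu).
  move=> N_gt0; apply: (maximizers_iff _ _ (@cross_config_modidx R d N)).
  - by move=> mu; apply: in_PN_Pfin.
  - by move=> mu mu_cross a; apply: cross_config_energy N_gt0 mu_cross.
  - by move=> a mu a1; apply: cross_config_of_energy_eq.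
split.
  split=> [C1 a a1 N N_gt0|C2 N N_gt0]; first exact: (PN_iff N N_gt0).1 (C1 N N_gt0) a a1.
  by apply: (PN_iff N N_gt0).2 => a a1; apply: C2.
apply: (maximizers_iff _ _ (@cross_fin_uniform R d)).
- by [].
- by move=> mu mu_cross a; apply: cross_fin_energy mu_cross.
- by move=> a mu a1; apply: cross_fin_of_energy_eq.
Qed.
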